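(* Let $k\ge1$. The logic $\mathbb{L}_k^{\le}$ is finitely equivalential, with set of equivalence formulas $E(p,q)=\{\delta(p,q)\}$, and hence protoalgebraic; but $\mathbb{L}_k^{\le}$ is not algebraizable in the sense of Blok and Pigozzi.
   Context: A modal pseudocomplemented De Morgan algebra ($mpM$-algebra) is an algebra $\langle A,\wedge,\vee,\sim,{}^\ast,0,1\rangle$ such that $\langle A,\wedge,\vee,\sim,0,1\rangle$ is a De Morgan algebra (bounded distributive lattice with $\sim\sim x=x$, $\sim(x\vee y)=\sim x\wedge\sim y$), $x^\ast$ is the pseudocomplement of $x$, and $x\vee\sim x\le x\vee x^\ast$. A $\mathcal{C}_k$-algebra ($k\ge1$) is a pair $(A,t)$ with $A$ an $mpM$-algebra and $t$ an $mpM$-automorphism of $A$ with $t^k=\mathrm{id}$. $Fm$ is the set of formulas built from a denumerable set of variables with connectives $\wedge,\vee$ (binary), $\sim,{}^\ast,t$ (unary), $\top,\bot$ (constants); a valuation into $(A,t)$ is a homomorphism $v:Fm\to(A,t)$ (with $v(\top)=1$, $v(\bot)=0$). The degree-preserving logic $\mathbb{L}_k^{\le}=\langle Fm,\models_k^{\le}\rangle$: for nonempty finite $\{\alpha_1,\dots,\alpha_n\}$, $\alpha_1,\dots,\alpha_n\models_k^{\le}\alpha$ iff for every $\mathcal{C}_k$-algebra $(A,t)$, every valuation $v$ and every $a\in A$, if $v(\alpha_i)\ge a$ for all $i$ then $v(\alpha)\ge a$; $\emptyset\models_k^{\le}\alpha$ iff $v(\alpha)=1$ for all $(A,t)$ and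 $v$; for infinite $\Gamma$, $\Gamma\models_k^{\le}\alpha$ iff some finite nonempty subset entails $\alpha$. Define $x\to y=\sim\big((\sim(x\vee y))^\ast\wedge(x\vee y)\big)\vee\big((\sim(x\wedge y))^\ast\wedge(x\wedge y)\big)$, $x\leftrightarrow y=(x\to y)\wedge(\sim y\to\sim x)$, and $\delta(p,q)=\bigwedge_{i=0}^{k-1}(t^ip\leftrightarrow t^iq)$. A logic $L$ is finitely equivalential if there is a finite set $E(p,q)$ of formulas in two variables with: (E1) $\vdash_L\varepsilon(p,p)$ for all $\varepsilon\in E$; (E2) $E(p,q)\cup\{p\}\vdash_L q$; (E3) for every $n$-ary connective $\#$, $E(p_1,q_1)\cup\dots\cup E(p_n,q_n)\vdash_L E(\#(p_1,\dots,p_n),\#(q_1,\dots,q_n))$. $L$ is protoalgebraic if for every algebra $\mathbf A$ the Leibniz operator $F\mapsto\boldsymbol\Omega_{\mathbf A}F$ (largest congruence compatible with $F$) is monotone on $L$-filters of $\mathbf A$. $L$ is algebraizable (Blok–Pigozzi) if there are a set of equivalence formulas $\Delta(p,q)$ and defining equations $E(p)$ satisfying the standard conditions, equivalently the Leibniz operator is a lattice isomorphism between $L$-filters and relative congruences on every algebra. *)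

From Stdlib Require Import List.
Import ListNotations.

Inductive Fm : Type :=
| Var : nat -> Fm
| And : Fm -> Fm -> Fm
| Or : Fm -> Fm -> Fm
| Neg : Fm -> Fm
| Star : Fm -> Fm
| Tc : Fm -> Fm
| Top : Fm
| Bot : Fm.

Fixpoint subst (s : nat -> Fm) (f : Fm) : Fm :=
  match f with
  | Var n => s n
  | And a b => And (subst s a) (subst s b)
  | Or a b => Or (subst s a) (subst s b)
  | Neg a => Neg (subst s a)
  | Star a => Star (subst s a)
  | Tc a => Tc (subst s a)
  | Top => Top
  | Bot => Bot
  end.

Fixpoint vars_in (P : nat -> Prop) (f : Fm) : Prop :=
  match f with
  | Var n => P n
  | And a b | Or a b => vars_in P a /\ vars_in P b
  | Neg a | Star a | Tc a => vars_in P a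
  | Top | Bot => True
  end.

(** substitution p := phi, q := psi, where p = Var 0, q = Var 1 *)
Definition sub2 (phi psi : Fm) (n : nat) : Fm :=
  match n with 0 => phi | 1 => psi | _ => Var n end.

Record sigalg : Type := SigAlg {
  car : Type;
  s_and : car -> car -> car;
  s_or : car -> car -> car;
  s_neg : car -> car;
  s_star : car -> car;
  s_t : car -> car;
  s_top : car;
  s_bot : car }.

Fixpoint eval (A : sigalg) (v : nat -> car A) (f : Fm) : car A :=
  match f with
  | Var n => v n
  | And a b => s_and A (eval A v a) (eval A v b)
  | Or a b => s_or A (eval A v a) (eval A v b)
  | Neg a => s_neg A (eval A v a)
  | Star a => s_star A (eval A v a)
  | Tc a => s_t A (eval A v a)
  | Top => s_top A
  | Bot => s_bot A
  end.

Definition le (A : sigalg) (x y : car A) : Prop := s_and A x y = x.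

Record Ck_alg (k : nat) : Type := CkAlg {
  ck :> sigalg;
  and_assoc : forall x y z : car ck, s_and ck x (s_and ck y z) = s_and ck (s_and ck x y) z;
  or_assoc : forall x y z : car ck, s_or ck x (s_or ck y z) = s_or ck (s_or ck x y) z;
  and_comm : forall x y : car ck, s_and ck x y = s_and ck y x;
  or_comm : forall x y : car ck, s_or ck x y = s_or ck y x;
  and_absorb : forall x y : car ck, s_and ck x (s_or ck x y) = x;
  or_absorb : forall x y : car ck, s_or ck x (s_and ck x y) = x;
  and_distr : forall x y z : car ck,
      s_and ck x (s_or ck y z) = s_or ck (s_and ck x y) (s_and ck x z);
  or_bot : forall x : car ck, s_or ck x (s_bot ck) = x;
  and_top : forall x : car ck, s_and ck x (s_top ck) = x;
  neg_invol : forall x : car ck, s_neg ck (s_neg ck x) = x;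
  neg_or : forall x y : car ck, s_neg ck (s_or ck x y) = s_and ck (s_neg ck x) (s_neg ck y);
  star_pc : forall x y : car ck, s_and ck x y = s_bot ck <-> le ck y (s_star ck x);
  mpM_ax : forall x : car ck,
      le ck (s_or ck x (s_neg ck x)) (s_or ck x (s_star ck x));
  t_and : forall x y : car ck, s_t ck (s_and ck x y) = s_and ck (s_t ck x) (s_t ck y);
  t_or : forall x y : car ck, s_t ck (s_or ck x y) = s_or ck (s_t ck x) (s_t ck y);
  t_neg : forall x : car ck, s_t ck (s_neg ck x) = s_neg ck (s_t ck x);
  t_star : forall x : car ck, s_t ck (s_star ck x) = s_star ck (s_t ck x);
  t_top : s_t ck (s_top ck) = s_top ck;
  t_bot : s_t ck (s_bot ck) = s_bot ck;
  t_inj : forall x y : car ck, s_t ck x = s_t ck y -> x = y;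
  t_surj : forall y : car ck, exists x, s_t ck x = y;
  t_period : forall x : car ck, Nat.iter k (s_t ck) x = x }.

Definition logic := (Fm -> Prop) -> Fm -> Prop.

Definition ck_entails (k : nat) (l : list Fm) (a : Fm) : Prop :=
  forall (A : Ck_alg k) (v : nat -> car A) (x : car A),
    (forall b, In b l -> le A x (eval A v b)) -> le A x (eval A v a).

Definition ck_valid (k : nat) (a : Fm) : Prop :=
  forall (A : Ck_alg k) (v : nat -> car A), eval A v a = s_top A.

Definition Lk (k : nat) : logic := fun G a =>
  ((forall b, ~ G b) /\ ck_valid k a) \/
  (exists l : list Fm, l <> [] /\ (forall b, In b l -> G b) /\ ck_entails k l a).

Definition imp (x y : Fm) : Fm :=
  Or (Neg (And (Star (Neg (Or x y))) (Or x y)))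
     (And (Star (Neg (And x y))) (And x y)).
Definition iff (x y : Fm) : Fm := And (imp x y) (imp (Neg y) (Neg x)).

Definition tpow (i : nat) (x : Fm) : Fm := Nat.iter i Tc x.

Fixpoint delta_upto (m : nat) (p q : Fm) : Fm :=
  match m with
  | 0 => iff (tpow 0 p) (tpow 0 q)
  | S m' => And (delta_upto m' p q) (iff (tpow m p) (tpow m q))
  end.

Definition delta (k : nat) : Fm := delta_upto (k - 1) (Var 0) (Var 1).

Definition no_prem : Fm -> Prop := fun _ => False.

Definition cons_all (L : logic) (G D : Fm -> Prop) : Prop :=
  forall a, D a -> L G a.

Definition inst2 (D : Fm -> Prop) (phi psi : Fm) : Fm -> Prop :=
  fun c => exists d, D d /\ c = subst (sub2 phi psi) d.

Definition union (X Y : Fm -> Prop) : Fm -> Prop := fun a => X a \/ Y a.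

Definition two_var (D : Fm -> Prop) : Prop :=
  forall d, D d -> vars_in (fun n => n = 0 \/ n = 1) d.

Definition equivalence_set (L : logic) (E : Fm -> Prop) : Prop :=
  two_var E /\
  cons_all L no_prem (inst2 E (Var 0) (Var 0)) /\
  L (union (inst2 E (Var 0) (Var 1)) (fun b => b = Var 0)) (Var 1) /\
  cons_all L (union (inst2 E (Var 0) (Var 1)) (inst2 E (Var 2) (Var 3)))
    (inst2 E (And (Var 0) (Var 2)) (And (Var 1) (Var 3))) /\
  cons_all L (union (inst2 E (Var 0) (Var 1)) (inst2 E (Var 2) (Var 3)))
    (inst2 E (Or (Var 0) (Var 2)) (Or (Var 1) (Var 3))) /\
  cons_all L (inst2 E (Var 0) (Var 1)) (inst2 E (Neg (Var 0)) (Neg (Var 1))) /\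
  cons_all L (inst2 E (Var 0) (Var 1)) (inst2 E (Star (Var 0)) (Star (Var 1))) /\
  cons_all L (inst2 E (Var 0) (Var 1)) (inst2 E (Tc (Var 0)) (Tc (Var 1))) /\
  cons_all L no_prem (inst2 E Top Top) /\
  cons_all L no_prem (inst2 E Bot Bot).

Definition finitely_equivalential (L : logic) : Prop :=
  exists E : list Fm, equivalence_set L (fun a => In a E).

Definition is_filter (L : logic) (A : sigalg) (F : car A -> Prop) : Prop :=
  forall G a, L G a -> forall v : nat -> car A,
    (forall b, G b -> F (eval A v b)) -> F (eval A v a).

Definition congruence (A : sigalg) (th : car A -> car A -> Prop) : Prop :=
  (forall x, th x x) /\ (forall x y, th x y -> th y x) /\
  (forall x y z, th x y -> th y z -> th x z) /\
  (forall x x' y y', th x x' -> th y y' -> th (s_and A x y) (s_and A x' y')) /\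
  (forall x x' y y', th x x' -> th y y' -> th (s_or A x y) (s_or A x' y')) /\
  (forall x x', th x x' -> th (s_neg A x) (s_neg A x')) /\
  (forall x x', th x x' -> th (s_star A x) (s_star A x')) /\
  (forall x x', th x x' -> th (s_t A x) (s_t A x')).

Definition compatible (A : sigalg) (th : car A -> car A -> Prop) (F : car A -> Prop) :=
  forall x y, th x y -> F x -> F y.

(** Leibniz congruence: the largest congruence compatible with F, i.e. the
    union of all congruences compatible with F *)
Definition leibniz (A : sigalg) (F : car A -> Prop) (x y : car A) : Prop :=
  exists th, congruence A th /\ compatible A th F /\ th x y.

Definition protoalgebraic (L : logic) : Prop :=
  forall (A : sigalg) (F G : car A -> Prop),
    is_filter L A F -> is_filter L A G -> (forall x, F x -> G x) ->
    forall x y, leibniz A F x y -> leibniz A G x y.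

(** Blok–Pigozzi algebraizability (syntactic characterization, BP Thm 4.7):
    a set Delta(p,q) of formulas and a set E(p) of equations such that
    (R) |- Delta(p,p); (Sym) Delta(p,q) |- Delta(q,p);
    (Trans) Delta(p,q) u Delta(q,r) |- Delta(p,r); (Rep) for each connective;
    (ALG4) p -||- Delta(E(p)). *)
Definition algebraizable (L : logic) : Prop :=
  exists (D : Fm -> Prop) (E : Fm * Fm -> Prop),
    two_var D /\
    (forall e, E e -> vars_in (fun n => n = 0) (fst e) /\ vars_in (fun n => n = 0) (snd e)) /\
    cons_all L no_prem (inst2 D (Var 0) (Var 0)) /\
    cons_all L (inst2 D (Var 0) (Var 1)) (inst2 D (Var 1) (Var 0)) /\
    cons_all L (union (inst2 D (Var 0) (Var 1)) (inst2 D (Var 1) (Var 2)))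
      (inst2 D (Var 0) (Var 2)) /\
    cons_all L (union (inst2 D (Var 0) (Var 1)) (inst2 D (Var 2) (Var 3)))
      (inst2 D (And (Var 0) (Var 2)) (And (Var 1) (Var 3))) /\
    cons_all L (union (inst2 D (Var 0) (Var 1)) (inst2 D (Var 2) (Var 3)))
      (inst2 D (Or (Var 0) (Var 2)) (Or (Var 1) (Var 3))) /\
    cons_all L (inst2 D (Var 0) (Var 1)) (inst2 D (Neg (Var 0)) (Neg (Var 1))) /\
    cons_all L (inst2 D (Var 0) (Var 1)) (inst2 D (Star (Var 0)) (Star (Var 1))) /\
    cons_all L (inst2 D (Var 0) (Var 1)) (inst2 D (Tc (Var 0)) (Tc (Var 1))) /\
    cons_all L no_prem (inst2 D Top Top) /\
    cons_all L no_prem (inst2 D Bot Bot) /\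
    (let DE := fun c => exists e d, E e /\ D d /\ c = subst (sub2 (fst e) (snd e)) d in
     cons_all L (fun b => b = Var 0) DE /\ L DE (Var 0)).

(** In a C_k-algebra [x <-> y] always denotes a Boolean
      element, and a Boolean [u] lies below [a <-> b] iff [a /\ u = b /\ u].
      Agreement below a Boolean [u] is a congruence for all mpM operations
      and [t] cyclically permutes the conjuncts [t^i a <-> t^i b] of [delta]
      (as [t^k = id]); this yields (E1)-(E3) degree-wise, and (E2) follows
      from [(a <-> b) /\ a <= b].
    - Abstract algebraic logic.  A filter [F] and a set [E] of two-variable
      formulas induce [a ~ b := E(a, b) in F]; each rule between instances
      of [E] becomes a closure property of [~].  For an equivalence set this
      makes [~] a congruence compatible with [F] containing every congruence
      compatible with a smaller filter: equivalential logics are protoalgebraic.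
    - Non-algebraizability.  Lattice filters of C_k-algebras are L_k^<=-filters;
      on the chain [0 < 1/2 < 1] (with [t = id]) the filters [{1/2, 1}] and
      [{1}] refute [p -||- Delta(E(p))] at [p := 1/2] for any candidate Delta. *)

From Stdlib Require Import List Lia PeanoNat.
Import ListNotations.

Arguments and_assoc {k} _.
Arguments or_assoc {k} _.
Arguments and_comm {k} _.
Arguments or_comm {k} _.
Arguments and_absorb {k} _.
Arguments or_absorb {k} _.
Arguments and_distr {k} _.
Arguments or_bot {k} _.
Arguments and_top {k} _.
Arguments neg_invol {k} _.
Arguments neg_or {k} _.
Arguments star_pc {k} _.
Arguments mpM_ax {k} _.
Arguments t_and {k} _.
Arguments t_or {k} _.
Arguments t_neg {k} _.
Arguments t_star {k} _.
Arguments t_period {k} _.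

Notation "x ⊓ y" := (s_and _ x y) (at level 40, left associativity).
Notation "x ⊔ y" := (s_or _ x y) (at level 50, left associativity).
Notation "∼ x" := (s_neg _ x) (at level 35, right associativity).
Notation "x ⁎" := (s_star _ x) (at level 30).
Notation "x ≤ y" := (le _ x y) (at level 70).

Lemma eval_subst (A : sigalg) (v : nat -> car A) (s : nat -> Fm) (f : Fm) :
  eval A v (subst s f) = eval A (fun n => eval A v (s n)) f.
Proof. induction f; simpl; congruence. Qed.

Lemma eval_ext (A : sigalg) (P : nat -> Prop) (v w : nat -> car A) (f : Fm) :
  vars_in P f -> (forall n, P n -> v n = w n) -> eval A v f = eval A w f.
Proof. induction f; simpl; intros; try tauto; f_equal; try tauto; auto. Qed.

Definition val2 {T : Type} (a b : T) (n : nat) : T :=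
  match n with 0 => a | 1 => b | _ => a end.
Definition vals4 {T : Type} (a b c d : T) (n : nat) : T :=
  match n with 0 => a | 1 => b | 2 => c | _ => d end.

Lemma eval_sub2 (A : sigalg) (v : nat -> car A) (phi psi d : Fm) :
  vars_in (fun n => n = 0 \/ n = 1) d ->
  eval A v (subst (sub2 phi psi) d) = eval A (val2 (eval A v phi) (eval A v psi)) d.
Proof.
  intro Hd. rewrite eval_subst. apply (eval_ext A _ _ _ _ Hd).
  intros n [-> | ->]; reflexivity.
Qed.

Lemma vars_in_tpow (P : nat -> Prop) (i n : nat) : P n -> vars_in P (tpow i (Var n)).
Proof. induction i; simpl; auto. Qed.

Lemma delta_two_var (m : nat) :
  vars_in (fun n => n = 0 \/ n = 1) (delta_upto m (Var 0) (Var 1)).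
Proof.
  assert (Hiff : forall i, vars_in (fun n => n = 0 \/ n = 1)
                             (iff (tpow i (Var 0)) (tpow i (Var 1)))).
  { intro i. simpl.
    pose proof (vars_in_tpow (fun n => n = 0 \/ n = 1) i 0 (or_introl eq_refl)).
    pose proof (vars_in_tpow (fun n => n = 0 \/ n = 1) i 1 (or_intror eq_refl)).
    tauto. }
  induction m; [apply Hiff | split; [exact IHm | apply Hiff]].
Qed.

Section CkAlgebraFacts.
Context {k : nat} (A : Ck_alg k).
Implicit Types (a b c d u v w x y z : car A).

Lemma meet_idem x : x ⊓ x = x.
Proof. pose proof (and_absorb A x (x ⊓ x)) as H. rewrite or_absorb in H. exact H. Qed.

Lemma join_idem x : x ⊔ x = x.
Proof. pose proof (or_absorb A x (x ⊔ x)) as H. rewrite and_absorb in H. exact H. Qed.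

Lemma and_distr_r x y z : (x ⊔ y) ⊓ z = (x ⊓ z) ⊔ (y ⊓ z).
Proof. rewrite and_comm, and_distr, (and_comm A z x), (and_comm A z y). reflexivity. Qed.

Lemma and_bot x : x ⊓ s_bot A = s_bot A.
Proof.
  pose proof (and_absorb A (s_bot A) x) as H. rewrite or_comm, or_bot in H.
  rewrite and_comm. exact H.
Qed.

Lemma le_or x y : x ≤ y <-> x ⊔ y = y.
Proof.
  unfold le; split; intro H.
  - rewrite <- H, or_comm, and_comm, or_absorb. reflexivity.
  - rewrite <- H, and_absorb. reflexivity.
Qed.

Lemma le_refl x : x ≤ x.
Proof. apply meet_idem. Qed.

Lemma le_trans x y z : x ≤ y -> y ≤ z -> x ≤ z.
Proof. unfold le; intros H1 H2. rewrite <- H1, <- and_assoc, H2. reflexivity. Qed.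

Lemma le_antisym x y : x ≤ y -> y ≤ x -> x = y.
Proof. unfold le; intros H1 H2. rewrite <- H1, and_comm. exact H2. Qed.

Lemma meet_l x y : x ⊓ y ≤ x.
Proof. unfold le. rewrite (and_comm A x y), <- and_assoc, meet_idem. reflexivity. Qed.

Lemma meet_r x y : x ⊓ y ≤ y.
Proof. unfold le. rewrite <- and_assoc, meet_idem. reflexivity. Qed.

Lemma meet_glb x y z : z ≤ x -> z ≤ y -> z ≤ x ⊓ y.
Proof. unfold le; intros H1 H2. rewrite and_assoc, H1, H2. reflexivity. Qed.

Lemma join_l x y : x ≤ x ⊔ y.
Proof. apply and_absorb. Qed.

Lemma join_r x y : y ≤ x ⊔ y.
Proof. rewrite or_comm. apply and_absorb. Qed.

Lemma join_lub x y z : x ≤ z -> y ≤ z -> x ⊔ y ≤ z.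
Proof. rewrite !le_or; intros H1 H2. rewrite <- or_assoc, H2, H1. reflexivity. Qed.

Lemma meet_le_l x y z : x ≤ z -> x ⊓ y ≤ z.
Proof. intro H. eapply le_trans; [apply meet_l | exact H]. Qed.

Lemma meet_le_r x y z : y ≤ z -> x ⊓ y ≤ z.
Proof. intro H. eapply le_trans; [apply meet_r | exact H]. Qed.

Lemma meet_mono a b c d : a ≤ b -> c ≤ d -> a ⊓ c ≤ b ⊓ d.
Proof. intros. apply meet_glb; [apply meet_le_l | apply meet_le_r]; auto. Qed.

Lemma split_l a b c y : a ⊓ c ≤ y -> b ⊓ c ≤ y -> (a ⊔ b) ⊓ c ≤ y.
Proof. intros. rewrite and_distr_r. apply join_lub; auto. Qed.

Lemma split_r a b c y : c ⊓ a ≤ y -> c ⊓ b ≤ y -> c ⊓ (a ⊔ b) ≤ y.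
Proof. intros. rewrite and_distr. apply join_lub; auto. Qed.

Lemma split_mid a b (b' : car A) c y :
  a ⊓ (b ⊓ c) ≤ y -> a ⊓ (b' ⊓ c) ≤ y -> a ⊓ ((b ⊔ b') ⊓ c) ≤ y.
Proof. intros. rewrite and_distr_r. apply split_r; auto. Qed.

Lemma le_bot x : s_bot A ≤ x.
Proof. unfold le. rewrite and_comm. apply and_bot. Qed.

Lemma le_top x : x ≤ s_top A.
Proof. apply and_top. Qed.

Lemma le_bot_eq x : x ≤ s_bot A -> x = s_bot A.
Proof. intro H. apply le_antisym; auto using le_bot. Qed.

Lemma neg_and x y : ∼ (x ⊓ y) = ∼ x ⊔ ∼ y.
Proof. rewrite <- (neg_invol A (∼ x ⊔ ∼ y)), neg_or, !neg_invol. reflexivity. Qed.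

Lemma neg_anti x y : x ≤ y -> ∼ y ≤ ∼ x.
Proof. rewrite le_or; intro H. rewrite <- H, neg_or. apply meet_l. Qed.

Lemma neg_bot : ∼ (s_bot A) = s_top A.
Proof.
  apply le_antisym; [apply le_top|].
  rewrite <- (neg_invol A (s_top A)) at 1. apply neg_anti, le_bot.
Qed.

Lemma nn_or x y : ∼ (∼ x ⊔ ∼ y) = x ⊓ y.
Proof. rewrite neg_or, !neg_invol. reflexivity. Qed.

Lemma nn_and x y : ∼ (∼ x ⊓ ∼ y) = x ⊔ y.
Proof. rewrite neg_and, !neg_invol. reflexivity. Qed.

Lemma star_meet x : x ⊓ x ⁎ = s_bot A.
Proof. apply (star_pc A). apply le_refl. Qed.

Lemma star_anti x y : x ≤ y -> y ⁎ ≤ x ⁎.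
Proof.
  intro H. apply (star_pc A). apply le_bot_eq.
  rewrite <- (star_meet y). apply meet_mono; [exact H | apply le_refl].
Qed.

Lemma mpM_dual w : ∼ w ⊓ ∼ (w ⁎) ≤ w.
Proof.
  pose proof (neg_anti _ _ (mpM_ax A w)) as H. rewrite !neg_or, neg_invol in H.
  eapply le_trans; [exact H | apply meet_r].
Qed.

(** ** Boolean (complemented) elements *)

(** [u] is Boolean when [~u] is its lattice complement. *)
Definition boolean u : Prop := u ⊓ ∼ u = s_bot A.

Lemma boolean_join u : boolean u -> u ⊔ ∼ u = s_top A.
Proof.
  unfold boolean; intro H.
  rewrite <- (neg_invol A (u ⊔ ∼ u)), neg_or, neg_invol, and_comm, H. apply neg_bot.
Qed.

Lemma boolean_neg u : boolean u -> boolean (∼ u).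
Proof. unfold boolean; intro H. rewrite neg_invol, and_comm. exact H. Qed.

Lemma boolean_and u v : boolean u -> boolean v -> boolean (u ⊓ v).
Proof.
  unfold boolean; intros Hu Hv. apply le_bot_eq. rewrite neg_and. apply split_r.
  - rewrite <- Hu. apply meet_mono; [apply meet_l | apply le_refl].
  - rewrite <- Hv. apply meet_mono; [apply meet_r | apply le_refl].
Qed.

Lemma boolean_or u v : boolean u -> boolean v -> boolean (u ⊔ v).
Proof.
  intros Hu Hv. rewrite <- nn_and.
  apply boolean_neg, boolean_and; apply boolean_neg; assumption.
Qed.

(** The "necessity" [N z = (~z)* /\ z] is always Boolean; this is where
    the mpM axiom is used. *)
Definition necessity z : car A := (∼ z) ⁎ ⊓ z.

Lemma boolean_necessity z : boolean (necessity z).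
Proof.
  unfold boolean, necessity. apply le_bot_eq. rewrite neg_and. apply split_r.
  - pose proof (mpM_dual (∼ z)) as H. rewrite neg_invol in H.
    apply le_trans with (y := (∼ z) ⁎ ⊓ ∼ z).
    + apply meet_glb; [apply meet_le_l, meet_l|].
      eapply le_trans; [|exact H].
      apply meet_glb; [apply meet_le_l, meet_r | apply meet_r].
    + rewrite and_comm, star_meet. apply le_refl.
  - rewrite <- (star_meet (∼ z)), (and_comm A (∼ z)).
    apply meet_mono; [apply meet_l | apply le_refl].
Qed.

Definition impv x y : car A :=
  ∼ necessity (x ⊔ y) ⊔ necessity (x ⊓ y).
Definition iffv x y : car A := impv x y ⊓ impv (∼ y) (∼ x).

Lemma boolean_iffv x y : boolean (iffv x y).
Proof.
  unfold iffv, impv.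
  apply boolean_and; apply boolean_or; auto using boolean_neg, boolean_necessity.
Qed.

Lemma iffv_refl x : iffv x x = s_top A.
Proof.
  assert (Himp : forall y, impv y y = s_top A).
  { intro y. unfold impv. rewrite meet_idem, join_idem, or_comm.
    apply boolean_join, boolean_necessity. }
  unfold iffv. rewrite !Himp. apply and_top.
Qed.

Lemma iffv_comm x y : iffv x y = iffv y x.
Proof.
  unfold iffv, impv. rewrite (or_comm A x y), (and_comm A x y), (or_comm A (∼ y) (∼ x)),
    (and_comm A (∼ y) (∼ x)). reflexivity.
Qed.

(** Distribution bookkeeping for [iffv_mp]: after expanding [x <-> y] as
    [(P1 \/ P2 \/ P3) /\ (Q1 \/ Q2 \/ Q3)], only five of the nine cross
    terms need an argument. *)
Lemma meet_joins3_le (P1 P2 P3 Q1 Q2 Q3 x y : car A) :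
  P3 ≤ y -> Q2 ≤ y -> Q3 ⊓ x ≤ y -> P2 ⊓ Q1 ≤ y -> P1 ⊓ x ≤ P2 ->
  ((P1 ⊔ P2) ⊔ P3) ⊓ ((Q1 ⊔ Q2) ⊔ Q3) ⊓ x ≤ y.
Proof.
  intros h3 hq2 hq3 h21 h1. rewrite <- and_assoc.
  assert (G3 : forall a, a ⊓ (Q3 ⊓ x) ≤ y) by (intro; apply meet_le_r; exact hq3).
  assert (G2 : forall a, a ⊓ (Q2 ⊓ x) ≤ y) by (intro; apply meet_le_r, meet_le_l; exact hq2).
  assert (G21 : P2 ⊓ (Q1 ⊓ x) ≤ y).
  { eapply le_trans; [|exact h21]. apply meet_mono; [apply le_refl | apply meet_l]. }
  apply split_l; [apply split_l|].
  - apply split_mid; [apply split_mid|]; auto.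
    eapply le_trans; [|exact G21]. apply meet_glb.
    + eapply le_trans; [|exact h1]. apply meet_glb; [apply meet_l | apply meet_le_r, meet_r].
    + apply meet_r.
  - apply split_mid; [apply split_mid|]; auto.
  - apply meet_le_l. exact h3.
Qed.

Lemma iffv_mp x y : iffv x y ⊓ x ≤ y.
Proof.
  unfold iffv, impv, necessity. rewrite !neg_and, !nn_or, !neg_invol.
  apply meet_joins3_le.
  - apply meet_le_r, meet_r.
  - apply meet_l.
  - apply le_trans with (y := s_bot A); [|apply le_bot].
    rewrite <- (star_meet (y ⊔ x)), (and_comm A (y ⊔ x)).
    apply meet_mono; [apply meet_l | apply join_r].
  - eapply le_trans; [|apply (meet_l y x)]. eapply le_trans; [|apply (mpM_dual (y ⊓ x))].
    apply meet_mono; [|apply le_refl]. apply neg_anti.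
    eapply le_trans; [apply meet_l | apply join_r].
  - pose proof (mpM_dual (∼ (x ⊔ y))) as H. rewrite neg_invol in H.
    eapply le_trans; [|exact H]. rewrite and_comm. apply meet_mono; [apply join_l | apply le_refl].
Qed.

Definition agree u a b : Prop := a ⊓ u = b ⊓ u.

Lemma agree_and u a b c d : agree u a b -> agree u c d -> agree u (a ⊓ c) (b ⊓ d).
Proof.
  assert (Hsplit : forall e f, (e ⊓ f) ⊓ u = (e ⊓ u) ⊓ (f ⊓ u)).
  { intros e f. rewrite (and_assoc A (e ⊓ u)), <- (and_assoc A e u f), (and_comm A u f),
      and_assoc, <- (and_assoc A (e ⊓ f) u u), meet_idem. reflexivity. }
  unfold agree; intros H1 H2. rewrite (Hsplit a c), (Hsplit b d), H1, H2. reflexivity.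
Qed.

Lemma agree_or u a b c d : agree u a b -> agree u c d -> agree u (a ⊔ c) (b ⊔ d).
Proof. unfold agree; intros H1 H2. rewrite !and_distr_r, H1, H2. reflexivity. Qed.

(** Negation respects agreement only below Boolean elements. *)
Lemma agree_neg u a b : boolean u -> agree u a b -> agree u (∼ a) (∼ b).
Proof.
  assert (Hrel : forall e, boolean u -> ∼ e ⊓ u = ∼ (e ⊓ u) ⊓ u).
  { intros e Hu. rewrite neg_and, and_distr_r, (and_comm A (∼ u) u), Hu, or_bot.
    reflexivity. }
  unfold agree; intros Hu H. rewrite (Hrel a Hu), (Hrel b Hu), H. reflexivity.
Qed.

Lemma agree_star u a b : agree u a b -> agree u (a ⁎) (b ⁎).
Proof.
  assert (Hrel : forall e, e ⁎ ⊓ u = (e ⊓ u) ⁎ ⊓ u).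
  { intro e. apply le_antisym.
    - apply meet_mono; [apply star_anti, meet_l | apply le_refl].
    - apply meet_glb; [|apply meet_r].
      apply (star_pc A). apply le_bot_eq.
      rewrite <- (star_meet (e ⊓ u)). apply meet_glb.
      + apply meet_glb; [apply meet_l | apply meet_le_r, meet_r].
      + apply meet_le_r, meet_l. }
  unfold agree; intros H. rewrite (Hrel a), (Hrel b), H. reflexivity.
Qed.

Lemma agree_iffv u a b c d : boolean u -> agree u a b -> agree u c d ->
  agree u (iffv a c) (iffv b d).
Proof.
  intros Hu H1 H2.
  assert (Himp : forall a b c d, agree u a b -> agree u c d -> agree u (impv a c) (impv b d)).
  { clear H1 H2. intros a' b' c' d' H1 H2. unfold impv, necessity.
    pose proof (agree_or _ _ _ _ _ H1 H2). pose proof (agree_and _ _ _ _ _ H1 H2).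
    apply agree_or; [apply agree_neg; auto|];
      apply agree_and; auto; apply agree_star, agree_neg; auto. }
  unfold iffv. apply agree_and; apply Himp; auto; apply agree_neg; auto.
Qed.

Lemma below_iffv u a b : boolean u -> u ≤ iffv a b <-> agree u a b.
Proof.
  intro Hu. split.
  - unfold le, agree. intro H. set (B := iffv a b) in *.
    assert (E : B ⊓ a = B ⊓ b).
    { pose proof (iffv_mp a b) as Hab. pose proof (iffv_mp b a) as Hba.
      rewrite (iffv_comm b a) in Hba.
      apply le_antisym; apply meet_glb; try apply meet_l; assumption. }
    assert (X : forall c, c ⊓ u = u ⊓ (B ⊓ c)).
    { intro c. rewrite <- H at 1. rewrite (and_comm A c (u ⊓ B)), and_assoc. reflexivity. }
    rewrite (X a), (X b), E. reflexivity.
  - intro H. pose proof (agree_iffv u a a a b Hu (eq_refl _) H) as E.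
    unfold agree in E. rewrite iffv_refl in E.
    unfold le. rewrite and_comm, <- E, and_comm. apply and_top.
Qed.

Definition ti (i : nat) a : car A := Nat.iter i (s_t A) a.

Lemma ti_and i a b : ti i (a ⊓ b) = ti i a ⊓ ti i b.
Proof. induction i; simpl; auto. unfold ti in *; simpl. rewrite IHi, t_and. reflexivity. Qed.
Lemma ti_or i a b : ti i (a ⊔ b) = ti i a ⊔ ti i b.
Proof. induction i; simpl; auto. unfold ti in *; simpl. rewrite IHi, t_or. reflexivity. Qed.
Lemma ti_neg i a : ti i (∼ a) = ∼ ti i a.
Proof. induction i; simpl; auto. unfold ti in *; simpl. rewrite IHi, t_neg. reflexivity. Qed.
Lemma ti_star i a : ti i (a ⁎) = (ti i a) ⁎.
Proof. induction i; simpl; auto. unfold ti in *; simpl. rewrite IHi, t_star. reflexivity. Qed.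

Fixpoint deltav (m : nat) a b : car A :=
  match m with
  | 0 => iffv (ti 0 a) (ti 0 b)
  | S m' => deltav m' a b ⊓ iffv (ti (S m') a) (ti (S m') b)
  end.

Lemma boolean_deltav m a b : boolean (deltav m a b).
Proof. induction m; simpl; [|apply boolean_and; auto]; apply boolean_iffv. Qed.

Lemma deltav_refl m a : deltav m a a = s_top A.
Proof. induction m; simpl; rewrite ?IHm, iffv_refl; auto. apply and_top. Qed.

Lemma below_deltav m a b u :
  u ≤ deltav m a b <-> forall i, i <= m -> u ≤ iffv (ti i a) (ti i b).
Proof.
  induction m; simpl; split.
  - intros H i Hi. replace i with 0 by lia. exact H.
  - intro H. exact (H 0 (le_n 0)).
  - intros H i Hi. destruct (Nat.eq_dec i (S m)) as [->|Hne].
    + eapply le_trans; [exact H | apply meet_r].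
    + apply IHm; [eapply le_trans; [exact H | apply meet_l] | lia].
  - intro H. apply meet_glb; [apply IHm; intros; apply H; lia | exact (H (S m) (le_n _))].
Qed.

(** Modus ponens for [deltav] (the conjunct [i = 0] suffices). *)
Lemma deltav_mp m x a b : x ≤ deltav m a b -> x ≤ a -> x ≤ b.
Proof.
  intros H1 H2. eapply le_trans; [|apply (iffv_mp a b)]. apply meet_glb; auto.
  exact (proj1 (below_deltav m a b x) H1 0 (Nat.le_0_l m)).
Qed.

Lemma deltav_compat2 (op : car A -> car A -> car A) m x a b c d :
  (forall u a b c d, boolean u -> agree u a b -> agree u c d -> agree u (op a c) (op b d)) ->
  (forall i a c, ti i (op a c) = op (ti i a) (ti i c)) ->
  x ≤ deltav m a b -> x ≤ deltav m c d -> x ≤ deltav m (op a c) (op b d).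
Proof.
  intros Hop Hti H1 H2. set (u := deltav m a b ⊓ deltav m c d).
  assert (Hu : boolean u) by (apply boolean_and; apply boolean_deltav).
  apply le_trans with (y := u); [apply meet_glb; auto|].
  apply below_deltav. intros i Hi. rewrite !Hti. apply below_iffv; auto.
  apply Hop; auto; apply below_iffv; auto.
  - apply (proj1 (below_deltav m a b u)); [apply meet_l | exact Hi].
  - apply (proj1 (below_deltav m c d u)); [apply meet_r | exact Hi].
Qed.

Lemma deltav_compat1 (op : car A -> car A) m x a b :
  (forall u a b, boolean u -> agree u a b -> agree u (op a) (op b)) ->
  (forall i a, ti i (op a) = op (ti i a)) ->
  x ≤ deltav m a b -> x ≤ deltav m (op a) (op b).
Proof.
  intros Hop Hti H. apply (deltav_compat2 (fun a _ => op a) m x a b a b); auto.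
Qed.

(** [t] permutes the conjuncts of [deltav (k-1)] cyclically, since [t^k = id]. *)
Lemma deltav_compat_t x a b : 1 <= k ->
  x ≤ deltav (k - 1) a b -> x ≤ deltav (k - 1) (s_t A a) (s_t A b).
Proof.
  intros hk H. eapply le_trans; [exact H|].
  apply below_deltav. intros i Hi. unfold ti. rewrite <- !Nat.iter_succ_r.
  destruct (Nat.eq_dec (S i) k) as [E|E].
  - rewrite E, !t_period. apply (proj1 (below_deltav (k - 1) a b _) (le_refl _) 0). lia.
  - apply (proj1 (below_deltav (k - 1) a b _) (le_refl _) (S i)). lia.
Qed.

End CkAlgebraFacts.

(** ** [delta] is an equivalence formula for L_k^<= *)

Lemma eval_tpow (A : sigalg) (v : nat -> car A) (i : nat) (x : Fm) :
  eval A v (tpow i x) = Nat.iter i (s_t A) (eval A v x).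
Proof. induction i; simpl; congruence. Qed.

Lemma eval_delta_upto {k} (A : Ck_alg k) (v : nat -> car A) (m : nat) (p q : Fm) :
  eval A v (delta_upto m p q) = deltav A m (eval A v p) (eval A v q).
Proof.
  induction m; simpl; [reflexivity|].
  rewrite IHm, !eval_tpow. reflexivity.
Qed.

Lemma eval_delta_inst {k} (A : Ck_alg k) (v : nat -> car A) (phi psi : Fm) :
  eval A v (subst (sub2 phi psi) (delta k)) = deltav A (k - 1) (eval A v phi) (eval A v psi).
Proof.
  rewrite eval_sub2 by apply delta_two_var.
  unfold delta. rewrite eval_delta_upto. reflexivity.
Qed.

Section DeltaRules.
Variables (k : nat) (Delta : Fm -> Prop).
Hypothesis Delta_spec : forall a, Delta a <-> a = delta k.

Lemma inst2_delta (phi psi c : Fm) :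
  inst2 Delta phi psi c <-> c = subst (sub2 phi psi) (delta k).
Proof.
  split.
  - intros [d [Hd ->]]. apply Delta_spec in Hd as ->. reflexivity.
  - intros ->. exists (delta k). split; [apply Delta_spec|]; reflexivity.
Qed.

Let delta_le (A : Ck_alg k) (v : nat -> car A) (x : car A) (phi psi : Fm) : Prop :=
  x ≤ deltav A (k - 1) (eval A v phi) (eval A v psi).

Lemma Lk_delta_axiom (phi : Fm) : cons_all (Lk k) no_prem (inst2 Delta phi phi).
Proof.
  intros c Hc. apply inst2_delta in Hc as ->. left. split; [intros b []|].
  intros A v. rewrite eval_delta_inst. apply deltav_refl.
Qed.

Lemma Lk_delta_rule1 (phi psi phi' psi' : Fm) :
  (forall A v x, delta_le A v x phi psi -> delta_le A v x phi' psi') ->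
  cons_all (Lk k) (inst2 Delta phi psi) (inst2 Delta phi' psi').
Proof.
  intros Hsem c Hc. apply inst2_delta in Hc as ->. right.
  exists [subst (sub2 phi psi) (delta k)]. split; [discriminate|]. split.
  - intros b [<-|[]]. apply inst2_delta. reflexivity.
  - intros A v x Hx. rewrite eval_delta_inst. apply Hsem.
    specialize (Hx _ (or_introl eq_refl)). rewrite eval_delta_inst in Hx. exact Hx.
Qed.

Lemma Lk_delta_rule2 (phi1 psi1 phi2 psi2 phi' psi' : Fm) :
  (forall A v x, delta_le A v x phi1 psi1 -> delta_le A v x phi2 psi2 ->
     delta_le A v x phi' psi') ->
  cons_all (Lk k) (union (inst2 Delta phi1 psi1) (inst2 Delta phi2 psi2))
    (inst2 Delta phi' psi').
Proof.
  intros Hsem c Hc. apply inst2_delta in Hc as ->. right.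
  exists [subst (sub2 phi1 psi1) (delta k); subst (sub2 phi2 psi2) (delta k)].
  split; [discriminate|]. split.
  - intros b [<-|[<-|[]]]; [left | right]; apply inst2_delta; reflexivity.
  - intros A v x Hx. rewrite eval_delta_inst. apply Hsem.
    + specialize (Hx _ (or_introl eq_refl)). rewrite eval_delta_inst in Hx. exact Hx.
    + specialize (Hx _ (or_intror (or_introl eq_refl))).
      rewrite eval_delta_inst in Hx. exact Hx.
Qed.

Lemma delta_equivalence_set : 1 <= k -> equivalence_set (Lk k) Delta.
Proof.
  intro hk. unfold equivalence_set. repeat split.
  - intros d Hd. apply Delta_spec in Hd as ->. apply delta_two_var.
  - apply Lk_delta_axiom.
  - right. exists [subst (sub2 (Var 0) (Var 1)) (delta k); Var 0].
    split; [discriminate|]. split.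
    + intros b [<-|[<-|[]]]; [left; apply inst2_delta | right]; reflexivity.
    + intros A v x Hx. pose proof (Hx _ (or_introl eq_refl)) as Hdelta.
      rewrite eval_delta_inst in Hdelta.
      exact (deltav_mp A _ _ _ _ Hdelta (Hx _ (or_intror (or_introl eq_refl)))).
  - apply Lk_delta_rule2. intros A v x.
    apply (deltav_compat2 A (fun a b => a ⊓ b)); [intros; apply agree_and | apply ti_and]; auto.
  - apply Lk_delta_rule2. intros A v x.
    apply (deltav_compat2 A (fun a b => a ⊔ b)); [intros; apply agree_or | apply ti_or]; auto.
  - apply Lk_delta_rule1. intros A v x.
    apply (deltav_compat1 A (fun a => ∼ a)); [intros; apply agree_neg | apply ti_neg]; auto.
  - apply Lk_delta_rule1. intros A v x.
    apply (deltav_compat1 A (fun a => a ⁎)); [intros; apply agree_star | apply ti_star]; auto.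
  - apply Lk_delta_rule1. intros A v x. exact (deltav_compat_t A x _ _ hk).
  - apply Lk_delta_axiom.
  - apply Lk_delta_axiom.
Qed.

End DeltaRules.

Section InducedRelation.
Variables (L : logic) (A : sigalg) (E : Fm -> Prop).
Hypothesis E_two_var : two_var E.

Definition rel (F : car A -> Prop) (a b : car A) : Prop :=
  forall d, E d -> F (eval A (val2 a b) d).

Variable F : car A -> Prop.
Hypothesis F_filter : is_filter L A F.

Lemma rel_premise (v : nat -> car A) (phi psi : Fm) :
  rel F (eval A v phi) (eval A v psi) -> forall c, inst2 E phi psi c -> F (eval A v c).
Proof. intros H c [d [Hd ->]]. rewrite eval_sub2 by auto. auto. Qed.

Lemma rel_conclusion (G : Fm -> Prop) (v : nat -> car A) (phi psi : Fm) :
  cons_all L G (inst2 E phi psi) -> (forall b, G b -> F (eval A v b)) ->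
  rel F (eval A v phi) (eval A v psi).
Proof.
  intros Hrule HG d Hd. rewrite <- eval_sub2 by auto.
  apply (F_filter G); [apply Hrule; exists d; auto | exact HG].
Qed.

Lemma rel_axiom (v : nat -> car A) (phi psi : Fm) :
  cons_all L no_prem (inst2 E phi psi) -> rel F (eval A v phi) (eval A v psi).
Proof. intro H. apply (rel_conclusion no_prem); [exact H | intros b []]. Qed.

Lemma rel_rule1 (v : nat -> car A) (phi psi phi' psi' : Fm) :
  cons_all L (inst2 E phi psi) (inst2 E phi' psi') ->
  rel F (eval A v phi) (eval A v psi) -> rel F (eval A v phi') (eval A v psi').
Proof. intros H Hp. apply (rel_conclusion _ _ _ _ H). apply rel_premise, Hp. Qed.

Lemma rel_rule2 (v : nat -> car A) (phi1 psi1 phi2 psi2 phi' psi' : Fm) :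
  cons_all L (union (inst2 E phi1 psi1) (inst2 E phi2 psi2)) (inst2 E phi' psi') ->
  rel F (eval A v phi1) (eval A v psi1) -> rel F (eval A v phi2) (eval A v psi2) ->
  rel F (eval A v phi') (eval A v psi').
Proof.
  intros H H1 H2. apply (rel_conclusion _ _ _ _ H).
  intros b [Hb|Hb]; [apply (rel_premise v phi1 psi1) | apply (rel_premise v phi2 psi2)]; auto.
Qed.

Lemma rel_detach (a b : car A) :
  L (union (inst2 E (Var 0) (Var 1)) (fun c => c = Var 0)) (Var 1) ->
  rel F a b -> F a -> F b.
Proof.
  intros H Hab Ha. apply (F_filter _ _ H (val2 a b)).
  intros c [Hc | ->]; [apply (rel_premise (val2 a b) (Var 0) (Var 1)) | ]; assumption.
Qed.

(** The two halves of the algebraizability condition [p -||- Delta(E(p))],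
    read in a filter: here [E] plays the role of Delta and [Eqns] of [E(p)]. *)
Definition eq_transform (Eqns : Fm * Fm -> Prop) : Fm -> Prop :=
  fun c => exists e d, Eqns e /\ E d /\ c = subst (sub2 (fst e) (snd e)) d.

Lemma rel_of_point (Eqns : Fm * Fm -> Prop) (v : nat -> car A) :
  cons_all L (fun b => b = Var 0) (eq_transform Eqns) -> F (v 0) ->
  forall e, Eqns e -> rel F (eval A v (fst e)) (eval A v (snd e)).
Proof.
  intros H Hv e He d Hd. rewrite <- eval_sub2 by auto.
  apply (F_filter (fun b => b = Var 0)); [apply H; exists e, d; auto | intros b ->; exact Hv].
Qed.

Lemma point_of_rel (Eqns : Fm * Fm -> Prop) (v : nat -> car A) :
  L (eq_transform Eqns) (Var 0) ->
  (forall e, Eqns e -> rel F (eval A v (fst e)) (eval A v (snd e))) -> F (v 0).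
Proof.
  intros H Hrel. apply (F_filter _ _ H v).
  intros c [e [d [He [Hd ->]]]]. rewrite eval_sub2 by auto. apply Hrel; assumption.
Qed.

End InducedRelation.

(** ** Equivalential logics are protoalgebraic *)

Lemma congruence_eval (A : sigalg) (th : car A -> car A -> Prop) : congruence A th ->
  forall f v w, (forall n, th (v n) (w n)) -> th (eval A v f) (eval A w f).
Proof.
  intros [Hr [Hs [Ht [Ha [Ho [Hn [Hst Htt]]]]]]] f v w H.
  induction f; simpl; auto.
Qed.

(** Given an equivalence set [E] and a filter [G], [rel E G] is a congruence
    compatible with [G]; it contains every congruence compatible with a
    smaller filter [F], so the Leibniz operator is monotone. *)
Theorem equivalential_protoalgebraic (L : logic) (E : Fm -> Prop) :
  equivalence_set L E -> protoalgebraic L.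
Proof.
  intros [H2 [E1 [E2 [Eand [Eor [Eneg [Estar [Et [Etop Ebot]]]]]]]]].
  intros A F G HF HG FG x y [th [Hth [Hcompat Hxy]]].
  set (R := rel A E G).
  assert (Rrefl : forall a, R a a)
    by (intro a; exact (rel_axiom L A E H2 G HG (fun _ => a) _ _ E1)).
  assert (Rrep : forall f v w, (forall n, R (v n) (w n)) -> R (eval A v f) (eval A w f)).
  { intros f v w Hvw. induction f; simpl.
    - apply Hvw.
    - exact (rel_rule2 L A E H2 G HG (vals4 _ _ _ _) _ _ _ _ _ _ Eand IHf1 IHf2).
    - exact (rel_rule2 L A E H2 G HG (vals4 _ _ _ _) _ _ _ _ _ _ Eor IHf1 IHf2).
    - exact (rel_rule1 L A E H2 G HG (val2 _ _) _ _ _ _ Eneg IHf).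
    - exact (rel_rule1 L A E H2 G HG (val2 _ _) _ _ _ _ Estar IHf).
    - exact (rel_rule1 L A E H2 G HG (val2 _ _) _ _ _ _ Et IHf).
    - exact (rel_axiom L A E H2 G HG (fun _ => s_top A) _ _ Etop).
    - exact (rel_axiom L A E H2 G HG (fun _ => s_bot A) _ _ Ebot). }
  assert (Rcompat : forall a b, R a b -> G a -> G b)
    by (intros a b; exact (rel_detach L A E H2 G HG a b E2)).
  (* symmetry and transitivity: replace one argument of [E(a, b)] using [Rrep] *)
  assert (Rsym : forall a b, R a b -> R b a).
  { intros a b Hab d Hd. apply (Rcompat (eval A (val2 a a) d)); [|apply Rrefl, Hd].
    apply Rrep. intros [|[|n]]; simpl; auto. }
  assert (Rtrans : forall a b c, R a b -> R b c -> R a c).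
  { intros a b c Hab Hbc d Hd. apply (Rcompat (eval A (val2 b c) d)); [|apply Hbc, Hd].
    apply Rrep. intros [|[|n]]; simpl; auto. }
  exists R. split; [|split].
  - (* each operation is compatible: an instance of [Rrep] for [#(p, q)] *)
    assert (Rval2 : forall a b a' b', R a a' -> R b b' -> forall n, R (val2 a b n) (val2 a' b' n))
      by (intros a b a' b' Ha Hb [|[|n]]; assumption).
    refine (conj Rrefl (conj Rsym (conj Rtrans (conj _ (conj _ (conj _ (conj _ _))))))).
    + intros a a' b b' Ha Hb. exact (Rrep (And (Var 0) (Var 1)) _ _ (Rval2 a b a' b' Ha Hb)).
    + intros a a' b b' Ha Hb. exact (Rrep (Or (Var 0) (Var 1)) _ _ (Rval2 a b a' b' Ha Hb)).
    + intros a a' Ha. exact (Rrep (Neg (Var 0)) _ _ (Rval2 a a a' a' Ha Ha)).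
    + intros a a' Ha. exact (Rrep (Star (Var 0)) _ _ (Rval2 a a a' a' Ha Ha)).
    + intros a a' Ha. exact (Rrep (Tc (Var 0)) _ _ (Rval2 a a a' a' Ha Ha)).
  - exact Rcompat.
  - intros d Hd. apply FG.
    apply (Hcompat (eval A (val2 x x) d));
      [|exact (rel_axiom L A E H2 F HF (fun _ => x) _ _ E1 d Hd)].
    apply (congruence_eval A th Hth). destruct Hth as [Hr _].
    intros [|[|n]]; simpl; auto.
Qed.

(** ** L_k^<= is not algebraizable *)

Lemma lattice_filter_Lk {k} (A : Ck_alg k) (F : car A -> Prop) :
  F (s_top A) -> (forall x y, F x -> F y -> F (x ⊓ y)) ->
  (forall x y, x ≤ y -> F x -> F y) -> is_filter (Lk k) A F.
Proof.
  intros Htop Hmeet Hup G a HL v HG.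
  destruct HL as [[_ Hvalid] | [l [_ [Hl Hent]]]]; [rewrite Hvalid; exact Htop|].
  set (x := fold_right (fun b acc => eval A v b ⊓ acc) (s_top A) l).
  assert (Hx_le : forall b, In b l -> x ≤ eval A v b).
  { unfold x. clear Hl Hent. induction l as [|c l IH]; intros b Hb; [destruct Hb|].
    destruct Hb as [<-|Hb]; [apply meet_l | apply meet_le_r, IH, Hb]. }
  assert (Hx_F : F x).
  { unfold x. clear Hx_le x Hent. induction l as [|c l IH]; simpl; [exact Htop|].
    apply Hmeet; [apply HG, Hl; left; reflexivity | apply IH; intros; apply Hl; right; auto]. }
  exact (Hup x _ (Hent A v x Hx_le) Hx_F).
Qed.

(** The three-element chain [0 < 1/2 < 1] with its Kleene negation and
    pseudocomplement, and [t = id]: a C_k-algebra for every [k]. *)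
Inductive T3 := Z3 | H3 | O3.

Definition and3 (x y : T3) : T3 :=
  match x, y with
  | Z3, _ | _, Z3 => Z3
  | H3, _ | _, H3 => H3
  | O3, O3 => O3 end.
Definition or3 (x y : T3) : T3 :=
  match x, y with
  | O3, _ | _, O3 => O3
  | H3, _ | _, H3 => H3
  | Z3, Z3 => Z3 end.
Definition neg3 (x : T3) : T3 := match x with Z3 => O3 | H3 => H3 | O3 => Z3 end.
Definition star3 (x : T3) : T3 := match x with Z3 => O3 | _ => Z3 end.

Definition T3_sigalg : sigalg := SigAlg T3 and3 or3 neg3 star3 (fun x => x) O3 Z3.

Definition T3_alg (k : nat) : Ck_alg k.
Proof.
  apply (CkAlg k T3_sigalg); unfold le; simpl;
    try (intros; repeat match goal with x : T3 |- _ => destruct x end; simpl; try tauto;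
         split; intro; try reflexivity; discriminate).
  - intro y. exists y. reflexivity.
  - intro x. induction k; simpl; auto.
Defined.

Lemma T3_simple (th : T3 -> T3 -> Prop) :
  (forall a, th a a) -> (forall a b, th a b -> th b a) ->
  (forall a b c, th a b -> th b c -> th a c) ->
  (forall a b, th a b -> th (neg3 a) (neg3 b)) ->
  (forall a b c d, th a b -> th c d -> th (and3 a c) (and3 b d)) ->
  forall a b, th a b -> a <> b -> forall x y, th x y.
Proof.
  intros Hrefl Hsym Htrans Hneg Hand a b Hab Hne.
  assert (ZH : th Z3 H3).
  { destruct a, b; try (exfalso; apply Hne; reflexivity).
    - exact Hab.
    - exact (Hand _ _ _ _ Hab (Hrefl H3)).
    - apply Hsym, Hab.
    - apply Hsym, (Hneg _ _ Hab).
    - exact (Hand _ _ _ _ (Hsym _ _ Hab) (Hrefl H3)).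
    - exact (Hneg _ _ Hab). }
  assert (HO : th H3 O3) by exact (Hsym _ _ (Hneg _ _ ZH)).
  assert (ZO : th Z3 O3) by exact (Htrans _ _ _ ZH HO).
  intros [] []; solve [apply Hrefl | assumption | apply Hsym; assumption].
Qed.

(** On the chain, with the lattice filters [{1/2, 1}] and [{1}], any
    candidate Delta induces the identity relation for the first filter
    (by simplicity, since [0] is not in it); the condition
    [p -||- Delta(E(p))] at [p := 1/2] then transfers membership of [1/2]
    from the first filter to the second, which is absurd. *)
Theorem Lk_not_algebraizable (k : nat) : ~ algebraizable (Lk k).
Proof.
  intros [D [Eqns [H2 [_ [HR [HS [HT [Hand [_ [Hneg [_ [_ [_ [_ [H4a H4b]]]]]]]]]]]]]]].
  set (A := T3_alg k).
  set (Fh := fun x : T3 => x = H3 \/ x = O3).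
  set (F1 := fun x : T3 => x = O3).
  assert (fh : is_filter (Lk k) A Fh).
  { apply lattice_filter_Lk; unfold Fh, le; simpl.
    - right; reflexivity.
    - intros [] [] [] []; simpl; try discriminate; auto.
    - intros [] [] Hxy []; simpl in *; try discriminate; auto. }
  assert (f1 : is_filter (Lk k) A F1).
  { apply lattice_filter_Lk; unfold F1, le; simpl.
    - reflexivity.
    - intros [] [] ? ?; simpl; try discriminate; auto.
    - intros [] [] Hxy ?; simpl in *; try discriminate; auto. }
  set (R := rel A D Fh).
  assert (Rrefl : forall a, R a a)
    by (intro a; exact (rel_axiom _ A D H2 Fh fh (fun _ => a) _ _ HR)).
  assert (Rsym : forall a b, R a b -> R b a)
    by (intros a b; exact (rel_rule1 _ A D H2 Fh fh (val2 a b) _ _ _ _ HS)).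
  assert (Rtrans : forall a b c, R a b -> R b c -> R a c)
    by (intros a b c; exact (rel_rule2 _ A D H2 Fh fh (vals4 a b c c) _ _ _ _ _ _ HT)).
  assert (Rneg : forall a b, R a b -> R (neg3 a) (neg3 b))
    by (intros a b; exact (rel_rule1 _ A D H2 Fh fh (val2 a b) _ _ _ _ Hneg)).
  assert (Rand : forall a b c d, R a b -> R c d -> R (and3 a c) (and3 b d))
    by (intros a b c d; exact (rel_rule2 _ A D H2 Fh fh (vals4 a b c d) _ _ _ _ _ _ Hand)).
  (* [R] is not total: otherwise [p -||- Delta(E(p))] at [p := 0] puts [0] in [Fh] *)
  assert (Rnot_total : ~ (forall x y, R x y)).
  { intro Htotal.
    destruct (point_of_rel _ A D H2 Fh fh Eqns (fun _ => Z3) H4b (fun e _ => Htotal _ _))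
      as [H|H]; discriminate. }
  assert (Ridentity : forall a b, R a b -> a = b).
  { intros a b Hab. destruct a, b; try reflexivity; exfalso;
      apply Rnot_total, (T3_simple R Rrefl Rsym Rtrans Rneg Rand _ _ Hab); discriminate. }
  (* at [p := 1/2]: [Delta(E(p))] holds in [Fh], hence (by [Ridentity]) in [F1] *)
  set (v := fun _ : nat => H3).
  assert (Hv : F1 (v 0)).
  { apply (point_of_rel _ A D H2 F1 f1 Eqns v H4b). intros e He.
    rewrite (Ridentity _ _ (rel_of_point _ A D H2 Fh fh Eqns v H4a (or_introl eq_refl) e He)).
    exact (rel_axiom _ A D H2 F1 f1 (fun _ => eval A v (snd e)) _ _ HR). }
  discriminate Hv.
Qed.

Theorem theorem6p12 (k : nat) (hk : 1 <= k) :
  equivalence_set (Lk k) (fun a => a = delta k) /\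
  finitely_equivalential (Lk k) /\
  protoalgebraic (Lk k) /\
  ~ algebraizable (Lk k).
Proof.
  assert (Hdelta : equivalence_set (Lk k) (fun a => a = delta k))
    by exact (delta_equivalence_set k _ (fun a => iff_refl _) hk).
  split; [exact Hdelta|]. split; [|split].
  - exists [delta k]. apply (delta_equivalence_set k); [|exact hk].
    intro a. simpl. split; [intros [<-|[]]; reflexivity | intros ->; left; reflexivity].
  - exact (equivalential_protoalgebraic _ _ Hdelta).
  - apply Lk_not_algebraizable.
Qed.
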